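(* Let $N\ge 1$, let $\Delta\subseteq\{0,1\}^N$ and let $g:\Delta\to\{0,1\}$ be a partial Boolean function. Suppose $g$ is computed by an $R$-round deterministic AMPC algorithm with I/O capacity $S$. Then there is a real polynomial $p(x_1,\dots,x_N)$ of degree at most $S^{2R}$ such that $p(x)=g(x)$ for every $x\in\Delta$ and $p(x)\in\{0,1\}$ for every $x\in\{0,1\}^N\setminus\Delta$. In particular, if $g$ is total (i.e. $\Delta=\{0,1\}^N$), then $\deg(g)\le S^{2R}$.
   Context: AMPC model with I/O capacity $S$ (a positive integer). The computation proceeds in rounds $1,\dots,R$, communicating through distributed data stores (DDS) $\mathcal{D}_0,\mathcal{D}_1,\dots,\mathcal{D}_R$. A DDS stores, under each key, a multiset of values (possibly empty); each value is written by a unique machine and duplicates are allowed. On input $x\in\{0,1\}^N$, $\mathcal{D}_0$ consists of the $N$ key-value pairs $(i,x_i)$, $i=1,\dots,N$. In round $r\ge1$, each machine (there may be arbitrarily many machines, each computationally unbounded and deterministic) adaptively makes a sequence of queries to $\mathcal{D}_{r-1}$: each query is a key, the response is the entire multiset of values stored under that key in $\mathcal{D}_{r-1}$ (empty if none), and each query may depend arbitrarily on the keys and responses of the machine's earlier queries in that round. The sum of the total number of values in all responses and the number of queries with empty response is at most $S$; then the machine writes at most $S$ key-value pairs to $\mathcal{D}_r$, as an arbitrary function of its sequence of queries and responses. The multiset stored under key $k$ in $\mathcal{D}_r$ is the multiset union of all values written under $k$ in round $r$. The algorithm is run on all inputs $x\in\{0,1\}^N$ (including invalid ones $x\notin\Delta$),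 where a machine whose budget would be exceeded stops querying and writes nothing; it is required that in every round, on every input in $\{0,1\}^N$, at most $S$ values are written under any single key. The algorithm computes $g$ in $R$ rounds if for every $x\in\Delta$, $\mathcal{D}_R$ contains exactly the single key-value pair $(\textsc{answer},g(x))$. For a total Boolean function $g:\{0,1\}^N\to\{0,1\}$, $\deg(g)$ is the degree of the unique multilinear real polynomial agreeing with $g$ on $\{0,1\}^N$. *)

From HB Require Import structures.
From mathcomp Require Import all_boot all_order all_algebra.
From mathcomp Require Import reals.
From mathcomp Require Import mpoly.
Set Implicit Arguments. Unset Strict Implicit. Unset Printing Implicit Defensive.

(* AMPC model.  Keys and values are drawn from the countable universe  *)
(* nat.  A multiset of values is represented canonically as a sorted   *)
(* list (sort leq), so a machine cannot observe any ordering beyond    *)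
(* the multiset itself.                                                 *)

(* A distributed data store: key |-> multiset (sorted list) of values. *)
Definition dds := nat -> seq nat.

Inductive action :=
  | Query of nat
  | Output of seq (nat * nat).

Definition strategy := seq (nat * seq nat) -> action.

Definition resp_cost (r : seq nat) : nat := maxn 1 (size r).

(* Execution of a machine on a store D with budget S; [None] means the
   budget would be exceeded, in which case the machine writes nothing.
   Every query costs at least 1, so fuel S.+2 is never exhausted before
   either an output or a budget overflow happens. *)
Fixpoint exec_fuel (S : nat) (D : dds) (st : strategy) (fuel : nat)
    (hist : seq (nat * seq nat)) (cost : nat) : option (seq (nat * nat)) :=
  match fuel with
  | 0 => None
  | fuel'.+1 =>
    match st hist with
    | Output w => Some w
    | Query k =>
        let c := cost + resp_cost (D k) in
        if S < c then None
        else exec_fuel S D st fuel' (rcons hist (k, D k)) c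
    end
  end.

Definition exec (S : nat) (D : dds) (st : strategy) : option (seq (nat * nat)) :=
  exec_fuel S D st S.+2 [::] 0.

Definition writes (S : nat) (D : dds) (st : strategy) : seq (nat * nat) :=
  odflt [::] (exec S D st).

(* An AMPC algorithm: in round r there are [nmach r] machines (numbered
   0 .. nmach r - 1), machine m following strategy [strat r m]. *)
Record ampc_alg := AMPCAlg {
  nmach : nat -> nat;
  strat : nat -> nat -> strategy
}.

Definition round_writes (S : nat) (A : ampc_alg) (r : nat) (D : dds)
  : seq (nat * nat) :=
  flatten [seq writes S D (strat A r m) | m <- iota 0 (nmach A r)].

Definition dds_of (w : seq (nat * nat)) : dds :=
  fun k => sort leq [seq p.2 | p <- w & p.1 == k].

(* Initial store D_0: key i.+1 holds x_i (as 0/1), for the 0-based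
   index i < N; all other keys are empty. *)
Definition D0 (N : nat) (x : {ffun 'I_N -> bool}) : dds :=
  fun k => match k with
           | 0 => [::]
           | i.+1 => if insub i is Some j then [:: nat_of_bool (x j)] else [::]
           end.

Fixpoint dds_at (N S : nat) (A : ampc_alg) (x : {ffun 'I_N -> bool}) (r : nat)
  : dds :=
  match r with
  | 0 => D0 x
  | r'.+1 => dds_of (round_writes S A r (dds_at S A x r'))
  end.

Definition ampc_valid (N S R : nat) (A : ampc_alg) : Prop :=
  forall (x : {ffun 'I_N -> bool}) (r : nat), 1 <= r <= R ->
    (forall m, m < nmach A r ->
       size (writes S (dds_at S A x r.-1) (strat A r m)) <= S) /\
    (forall k, size (dds_at S A x r k) <= S).

Definition ampc_computes (N S R : nat) (A : ampc_alg) (ans : nat)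
    (Delta : {set {ffun 'I_N -> bool}}) (g : {ffun 'I_N -> bool} -> bool) : Prop :=
  forall x, x \in Delta ->
    forall k, dds_at S A x R k = if k == ans then [:: nat_of_bool (g x)] else [::].

Definition bool_pt (R : realType) (N : nat) (x : {ffun 'I_N -> bool}) : 'I_N -> R :=
  fun i => ((nat_of_bool (x i))%:R)%R.

Definition multilinear (R : realType) (N : nat) (p : {mpoly R[N]}) : Prop :=
  forall m, m \in msupp p -> forall i, (m i <= 1)%N.

(* Say that F : {0,1}^N -> R has cube degree d when some real polynomial of
   total degree at most d agrees with F on the cube.  By induction on r, the
   indicator of every event [D_r(k) = v] has cube degree at most S^(2r).
   A machine reading a store whose indicators have cube degree c follows a
   query tree of depth at most S, since every query costs at least 1, so any
   predicate of what it writes has cube degree S*c.  The contents of key k in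
   the next store are a function of the lists written under k by the
   machines; at most S of these lists are nonempty, and an
   inclusion-exclusion over the silent machines gives cube degree S*(S*c) for
   the indicator of each such configuration.  The answer key then yields the
   polynomial, which is {0,1}-valued on the whole cube.  For a total g, the
   coefficients of a multilinear representation are Mobius transforms of g,
   and these vanish above the degree of any polynomial agreeing with g. *)

From HB Require Import structures.
From mathcomp Require Import all_boot all_order all_algebra.
From mathcomp Require Import reals.
From mathcomp Require Import mpoly.
From mathcomp Require Import zify lra.
Import GRing.Theory.
Local Open Scope ring_scope.
Set Implicit Arguments. Unset Strict Implicit. Unset Printing Implicit Defensive.

Section CubeRepresentation.
Variables (R : realType) (N : nat).
Local Notation cube := {ffun 'I_N -> bool}.

Definition cube_rep (d : nat) (F : cube -> R) :=
  exists2 p : {mpoly R[N]}, (msize p <= d.+1)%N & forall x, p.@[bool_pt R x] = F x.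

Definition cube_brep (d : nat) (f : cube -> bool) := cube_rep d (fun x => (f x)%:R).

Lemma cube_rep_ext d F G : F =1 G -> cube_rep d F -> cube_rep d G.
Proof. by move=> FG [p Hp pF]; exists p => // x; rewrite pF FG. Qed.

Lemma cube_rep_widen d d' F : (d <= d')%N -> cube_rep d F -> cube_rep d' F.
Proof. by move=> le_dd' [p Hp pF]; exists p => //; apply: leq_trans Hp _. Qed.

Lemma cube_rep_cst d c : cube_rep d (fun=> c).
Proof.
exists c%:MP; last by move=> x; rewrite mevalC.
by rewrite msizeC; case: (c != 0).
Qed.

Lemma cube_brep_var i : cube_brep 1 (fun x => x i).
Proof. by exists 'X_i; [rewrite msizeX mdeg1 | move=> x; rewrite mevalXU]. Qed.

Lemma cube_repD a b F G :
  cube_rep a F -> cube_rep b G -> cube_rep (maxn a b) (fun x => F x + G x).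
Proof.
move=> [p Hp pF] [q Hq qG]; exists (p + q); last by move=> x; rewrite mevalD pF qG.
by apply: leq_trans (msizeD_le _ _) _; move: Hp Hq; lia.
Qed.

Lemma cube_repN d F : cube_rep d F -> cube_rep d (fun x => - F x).
Proof. by move=> [p Hp pF]; exists (- p); [rewrite msizeN | move=> x; rewrite mevalN pF]. Qed.

Lemma cube_repM a b F G :
  cube_rep a F -> cube_rep b G -> cube_rep (a + b) (fun x => F x * G x).
Proof.
move=> [p Hp pF] [q Hq qG]; exists (p * q); last by move=> x; rewrite mevalM pF qG.
have [->|nz_p] := eqVneq p 0; first by rewrite mul0r msize0.
have [->|nz_q] := eqVneq q 0; first by rewrite mulr0 msize0.
by rewrite msizeM // -subn1 leq_subLR; apply: leq_trans (leq_add Hp Hq) _; lia.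
Qed.

Lemma cube_rep_sum (I : eqType) (r : seq I) d (F : I -> cube -> R) :
  (forall i, i \in r -> cube_rep d (F i)) -> cube_rep d (fun x => \sum_(i <- r) F i x).
Proof.
elim: r => [|i r IH] HF.
  by apply: cube_rep_ext (cube_rep_cst d 0) => x; rewrite big_nil.
apply: cube_rep_ext (cube_rep_widen _ (cube_repD (HF i _) (IH _))) => //.
- by move=> x; rewrite big_cons.
- by rewrite maxnn.
- by rewrite mem_head.
- by move=> j rj; apply: HF; rewrite in_cons rj orbT.
Qed.

(* [G (f x) x] is the sum of the [[f x == v] * G v x] over the image of [f]. *)
Lemma cube_rep_dispatch (T : eqType) (f : cube -> T) (G : T -> cube -> R) a b :
  (forall y, cube_brep a (fun x => f x == f y)) ->
  (forall y, cube_rep b (G (f y))) ->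
  cube_rep (a + b) (fun x => G (f x) x).
Proof.
move=> Hf HG; pose r := undup (codom f).
apply: cube_rep_ext (cube_rep_sum (r := r) (F := fun v x => (f x == v)%:R * G v x) _).
  move=> x; rewrite (bigD1_seq (f x)) ?undup_uniq ?mem_undup ?codom_f //= eqxx mul1r.
  by rewrite big1 ?addr0 // => v; rewrite eq_sym => /negbTE->; rewrite mul0r.
by move=> v /[!mem_undup] /codomP[y ->]; exact: cube_repM (Hf y) (HG y).
Qed.

Lemma cube_brepN d f : cube_brep d f -> cube_brep d (fun x => ~~ f x).
Proof.
move=> Hf; apply: cube_rep_ext (cube_rep_widen _ (cube_repD (cube_rep_cst 0 1) (cube_repN Hf))).
  by move=> x; case: (f x); rewrite /= ?subrr ?subr0.
by rewrite max0n.
Qed.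

Lemma cube_brep_D0 k v : cube_brep 1 (fun x => D0 x k == v).
Proof.
case: k => [|i]; first exact: (cube_rep_cst 1 ([::] == v)%:R).
rewrite /D0; case: insubP => [j _ _|_]; last exact: (cube_rep_cst 1 ([::] == v)%:R).
have bitP y : cube_brep 1 (fun x => x j == y j).
  case: (y j).
    by apply: cube_rep_ext (cube_brep_var j) => x; rewrite eqb_id.
  by apply: cube_rep_ext (cube_brepN (cube_brep_var j)) => x; rewrite eqbF_neg.
exact: (cube_rep_dispatch (G := fun b _ => ([:: nat_of_bool b] == v)%:R) bitP
          (fun y => cube_rep_cst 0 _)).
Qed.

(* For a silent coordinate [t = z] the induction step uses
   [[L i x = z] * E = E - [L i x <> z] * E], with [E] the indicator for the
   remaining coordinates: in the second term coordinate [i] has used up one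
   unit of the sparsity budget [j]. *)
Lemma cube_brep_sparse_tuple (I : Type) (T : eqType) (z : T) (L : I -> cube -> T) e :
  (forall i t, cube_brep e (fun x => L i x == t)) ->
  forall (ms : seq I) (j : nat) (ts : seq T),
  exists2 G : cube -> R, cube_rep (j * e) G &
    forall x, (count (fun i => L i x != z) ms <= j)%N ->
      G x = ([seq L i x | i <- ms] == ts)%:R.
Proof.
move=> HL; elim=> [|i ms IH] j [|t ts].
- by exists (fun=> 1); [exact: cube_rep_cst | move=> x].
- by exists (fun=> 0); [exact: cube_rep_cst | move=> x].
- by exists (fun=> 0); [exact: cube_rep_cst | move=> x].
case: j => [|j].
  have [G0 HG0 G0E] := IH 0%N ts.
  exists (fun x => (t == z)%:R * G0 x); first exact: cube_repM (cube_rep_cst 0 _) HG0.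
  move=> x; case: (eqVneq (L i x) z) => [Lz|nLz];
    rewrite /= ?Lz ?nLz ?eqxx ?add0n ?add1n ?ltn0 // => cnt.
  by rewrite eqseq_cons (eq_sym z t); case: (t == z); rewrite ?mul1r ?mul0r ?G0E.
have [G1 HG1 G1E] := IH j ts.
have [tz|ntz] := eqVneq t z.
  have [G2 HG2 G2E] := IH j.+1 ts.
  exists (fun x => G2 x - (L i x != z)%:R * G1 x).
    apply: cube_rep_widen (cube_repD HG2 (cube_repN (cube_repM (cube_brepN (HL i z)) HG1))).
    by rewrite mulSn maxnn.
  move=> x; rewrite /= eqseq_cons tz.
  case: (eqVneq (L i x) z) => [Lz|nLz]; rewrite ?Lz ?nLz /= ?eqxx ?add0n ?add1n => cnt.
    by rewrite mul0r subr0 G2E.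
  by rewrite mul1r G2E ?G1E ?subrr //; apply: leqW.
exists (fun x => (L i x == t)%:R * G1 x); first by rewrite mulSn; exact: cube_repM (HL i t) HG1.
move=> x; rewrite /= eqseq_cons; case: (eqVneq (L i x) t) => [Lt|_] cnt; last by rewrite mul0r.
by rewrite mul1r G1E //; move: cnt; rewrite Lt ntz.
Qed.

Variable S : nat.

Lemma resp_cost_gt0 r : (0 < resp_cost r)%N.
Proof. by rewrite leq_max. Qed.

(* Every query costs at least one unit of the budget, so the remaining
   budget bounds the depth of the machine's query tree. *)
Lemma cube_brep_exec_fuel (D : cube -> dds) c :
  (forall k v, cube_brep c (fun x => D x k == v)) ->
  forall (st : strategy) (P : pred (option (seq (nat * nat)))) fuel hist cost,
  cube_brep ((S - cost) * c) (fun x => P (exec_fuel S (D x) st fuel hist cost)).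
Proof.
move=> HD st P; elim=> [|fuel IH] hist cost /=; first exact: cube_rep_cst.
case: (st hist) => [k|w] /=; last exact: cube_rep_cst.
have [le_S_cost|lt_cost_S] := leqP S cost.
  apply: cube_rep_ext (cube_rep_cst _ (P None)%:R) => x.
  by rewrite ifT //; have := resp_cost_gt0 (D x k); lia.
pose G v x : R := (P (if (S < cost + resp_cost v)%N then None
  else exec_fuel S (D x) st fuel (rcons hist (k, v)) (cost + resp_cost v)))%:R.
apply: cube_rep_widen
  (cube_rep_dispatch (G := G) (b := ((S - cost).-1 * c)%N) (fun y => HD k (D y k)) _).
  by rewrite -mulSn prednK ?subn_gt0.
move=> y; rewrite /G; case: ltnP => _; first exact: cube_rep_cst.
apply: cube_rep_widen (IH _ _); apply: leq_mul => //.
by have := resp_cost_gt0 (D y k); lia.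
Qed.

Lemma count_nonnil_le_size_flatten (T : eqType) (ss : seq (seq T)) :
  (count (fun s => s != [::]) ss <= size (flatten ss))%N.
Proof. by elim: ss => //= -[|a s] ss IH; rewrite size_cat /=; lia. Qed.

(* The content of key [k] after the round is determined by the tuple of
   value lists that the machines write under [k]; at most [S] of them are
   nonempty because at most [S] values end up under [k]. *)
Lemma cube_brep_round (A : ampc_alg) r (D : cube -> dds) c :
  (forall k v, cube_brep c (fun x => D x k == v)) ->
  (forall x k, size (dds_of (round_writes S A r (D x)) k) <= S)%N ->
  forall k v, cube_brep (S * (S * c)) (fun x => dds_of (round_writes S A r (D x)) k == v).
Proof.
move=> HD Hsize k v.
pose L m x := [seq p.2 | p <- writes S (D x) (strat A r m) & p.1 == k].
have HL m vs : cube_brep (S * c) (fun x => L m x == vs).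
  by have := cube_brep_exec_fuel HD (strat A r m)
    (fun o => [seq p.2 | p <- odflt [::] o & p.1 == k] == vs) S.+2 [::] 0; rewrite subn0.
pose ms := iota 0 (nmach A r).
have keyE x : dds_of (round_writes S A r (D x)) k = sort leq (flatten [seq L m x | m <- ms]).
  by rewrite /dds_of /round_writes filter_flatten map_flatten -!map_comp.
apply: cube_rep_ext (cube_rep_widen _ (cube_rep_dispatch (f := fun x => [seq L m x | m <- ms])
  (G := fun ls _ => (sort leq (flatten ls) == v)%:R) (a := S * (S * c)) (b := 0) _ _)).
- by move=> x /=; rewrite keyE.
- by rewrite addn0.
- move=> y; have [G HG GE] := cube_brep_sparse_tuple [::] HL ms S [seq L m y | m <- ms].
  apply: cube_rep_ext HG => x; rewrite GE //.
  have := count_nonnil_le_size_flatten [seq L m x | m <- ms].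
  by rewrite count_map -(size_sort leq) -keyE => /leq_trans; apply.
- by move=> y; exact: cube_rep_cst.
Qed.

Lemma cube_brep_dds_at (A : ampc_alg) Rounds : ampc_valid N S Rounds A ->
  forall r, (r <= Rounds)%N -> forall k v,
    cube_brep (S ^ (2 * r)) (fun x => dds_at S A x r k == v).
Proof.
move=> valid; elim=> [|r IH] le_r_R k v.
  by rewrite muln0 expn0; exact: cube_brep_D0.
have -> : (S ^ (2 * r.+1) = S * (S * S ^ (2 * r)))%N by rewrite -!expnS mulnS.
apply: (cube_brep_round (D := fun x => dds_at S A x r)); first by apply: IH; lia.
by move=> x; have [_] := valid x r.+1 le_r_R.
Qed.

End CubeRepresentation.

Section MobiusInversion.
Variables (R : realType) (N : nat).
Local Notation cube := {ffun 'I_N -> bool}.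

(* [mobius_weight s x] is [(-1)^(|s| - |x|)] if [x] is a subset of [s], and
   [0] otherwise, written as a product over coordinates. *)
Definition mobius_weight (s x : cube) : R :=
  \prod_i (if s i then (if x i then 1 else -1) else (~~ x i)%:R).

Definition mobius_coef (s : cube) (F : cube -> R) : R :=
  \sum_x mobius_weight s x * F x.

Definition mnm_support (m : 'X_{1..N}) : cube := [ffun i => m i != 0%N].

Lemma prodr_nat_bool (I : finType) (P : pred I) :
  \prod_i (P i)%:R = [forall i, P i]%:R :> R.
Proof.
have [allP|] := boolP [forall i, P i].
  by rewrite big1 // => i _; rewrite (forallP allP).
rewrite negb_forall => /existsP[i nPi].
by rewrite (bigD1 i) //= (negbTE nPi) mul0r.
Qed.

Lemma mobius_coef_monomial s (m : 'X_{1..N}) :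
  mobius_coef s (fun x => \prod_i bool_pt R x i ^+ m i) = (s == mnm_support m)%:R.
Proof.
pose F i (b : bool) : R := (if s i then (if b then 1 else -1) else (~~ b)%:R) * b%:R ^+ m i.
transitivity (\sum_(x : cube) \prod_i F i (x i)).
  by apply: eq_bigr => x _; rewrite /mobius_weight -big_split.
rewrite -bigA_distr_bigA.
have -> : (s == mnm_support m) = [forall i, s i == (m i != 0%N)].
  apply/eqP/forallP => [-> i|eq_s]; first by rewrite ffunE.
  by apply/ffunP => i; rewrite ffunE (eqP (eq_s i)).
rewrite -prodr_nat_bool; apply: eq_bigr => i _; rewrite big_bool /F.
by case: (s i); case: (m i) => [|n] /=; rewrite ?expr0 ?expr1n ?expr0n /=; lra.
Qed.

Lemma mobius_coef_meval s (p : {mpoly R[N]}) :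
  mobius_coef s (fun x => p.@[bool_pt R x]) =
  \sum_(m <- msupp p) p@_m * (s == mnm_support m)%:R.
Proof.
rewrite /mobius_coef; under eq_bigr do rewrite mevalE mulr_sumr.
rewrite exchange_big /=; apply: eq_bigr => m _.
rewrite -mobius_coef_monomial /mobius_coef mulr_sumr; apply: eq_bigr => x _.
by rewrite mulrCA.
Qed.

Lemma mnm_support_sum_le (m : 'X_{1..N}) : (\sum_i (mnm_support m i : nat) <= mdeg m)%N.
Proof. by rewrite mdegE; apply: leq_sum => i _; rewrite ffunE; case: (m i). Qed.

Lemma multilinear_mnm_supportE (m : 'X_{1..N}) i :
  (m i <= 1)%N -> m i = mnm_support m i.
Proof. by rewrite ffunE; case: (m i) => [|[]]. Qed.

Lemma multilinear_mnm_support_sum (m : 'X_{1..N}) :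
  (forall i, m i <= 1)%N -> \sum_i (mnm_support m i : nat) = mdeg m.
Proof. by move=> ml_m; rewrite mdegE; apply: eq_bigr => i _; rewrite -multilinear_mnm_supportE. Qed.

Lemma mobius_coef_meval_eq0 (p : {mpoly R[N]}) d (s : cube) :
  (msize p <= d.+1)%N -> (d < \sum_i (s i : nat))%N ->
  mobius_coef s (fun x => p.@[bool_pt R x]) = 0.
Proof.
move=> size_p d_lt_s; rewrite mobius_coef_meval big1_seq // => m /andP[_ supp_m].
have [s_m|] := eqVneq s (mnm_support m); last by rewrite mulr0.
have := msize_mdeg_lt supp_m; have := mnm_support_sum_le m; rewrite -s_m; lia.
Qed.

Lemma multilinear_mobius_coef (q : {mpoly R[N]}) m : multilinear q -> m \in msupp q ->
  mobius_coef (mnm_support m) (fun x => q.@[bool_pt R x]) = q@_m.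
Proof.
move=> ml_q supp_m; rewrite mobius_coef_meval (bigD1_seq m) ?msupp_uniq //= eqxx mulr1.
rewrite big1_seq ?addr0 // => m' /andP[m'_neq supp_m'].
have [same_supp|] := eqVneq (mnm_support m) (mnm_support m'); last by rewrite mulr0.
case/negP: m'_neq; apply/eqP/mnmP => i.
rewrite (multilinear_mnm_supportE (ml_q _ supp_m i)).
by rewrite (multilinear_mnm_supportE (ml_q _ supp_m' i)) same_supp.
Qed.

Lemma multilinear_msize_le (p q : {mpoly R[N]}) d :
  (msize p <= d.+1)%N -> multilinear q ->
  (forall x, q.@[bool_pt R x] = p.@[bool_pt R x]) -> (msize q <= d.+1)%N.
Proof.
move=> size_p ml_q qp; rewrite msizeE; apply/bigmax_leqP_seq => m supp_m _.
rewrite ltnS leqNgt; apply/negP => d_lt_m.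
move: (supp_m); rewrite mcoeff_msupp -(multilinear_mobius_coef ml_q supp_m).
have -> : mobius_coef (mnm_support m) (fun x => q.@[bool_pt R x]) =
          mobius_coef (mnm_support m) (fun x => p.@[bool_pt R x]).
  by apply: eq_bigr => x _; rewrite qp.
by rewrite (mobius_coef_meval_eq0 size_p) ?eqxx // (multilinear_mnm_support_sum (ml_q _ supp_m)).
Qed.

End MobiusInversion.

Theorem theorem3p2 (R : realType) (N S Rounds : nat) (ans : nat)
    (Delta : {set {ffun 'I_N -> bool}}) (g : {ffun 'I_N -> bool} -> bool)
    (A : ampc_alg) :
  (1 <= N)%N -> (0 < S)%N ->
  ampc_valid N S Rounds A ->
  ampc_computes S Rounds A ans Delta g ->
  (exists p : {mpoly R[N]},
      (msize p <= (S ^ (2 * Rounds)).+1)%N /\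
      (forall x, x \in Delta -> p.@[bool_pt R x] = (nat_of_bool (g x))%:R) /\
      (forall x, x \notin Delta -> p.@[bool_pt R x] = 0 \/ p.@[bool_pt R x] = 1))
  /\
  (Delta = [set: {ffun 'I_N -> bool}] ->
     forall q : {mpoly R[N]}, multilinear q ->
       (forall x, q.@[bool_pt R x] = (nat_of_bool (g x))%:R) ->
       (msize q <= (S ^ (2 * Rounds)).+1)%N).
Proof.
move=> _ _ valid computes.
have [p size_p pE] := cube_brep_dds_at R valid (leqnn Rounds) ans [:: 1%N].
have p_Delta x : x \in Delta -> p.@[bool_pt R x] = (nat_of_bool (g x))%:R.
  by move=> Dx; rewrite pE (computes x Dx ans) eqxx; case: (g x).
split.
  exists p; split=> //; split=> // x _.
  by rewrite pE; case: (_ == _); [right | left].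
move=> Delta_full q ml_q qg; apply: (multilinear_msize_le size_p ml_q) => x.
by rewrite qg p_Delta // Delta_full inE.
Qed.
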